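(* Let $k\ge 1$ be an integer and let $G$ be a finite simple graph with $\gamma^d_k(G)<\infty$. Let $S$ be a global defensive $k$-alliance in $G$ with $|S|=\gamma^d_k(G)$, and suppose that the induced subgraph $G\langle S\rangle$ has a $1$-perfect code. Let $H$ be a finite simple graph with at least two vertices. Then $G[H]$ has a global defensive $k$-alliance. Moreover, if $k\ge 2$, then $$\gamma^d_k(G[H])\leq n(H)\big(\gamma^d_k(G)-\gamma(G\langle S\rangle)\big)+\gamma(G\langle S\rangle),$$ where $\gamma(G\langle S\rangle)$ is the domination number of $G\langle S\rangle$.
   Context: All graphs are finite and simple; $n(H)=|V_H|$. For $S\subseteq V_G$ and $v\in V_G$, $N_S(v)=\{u\in S: uv\in E_G\}$ and $\bar S=V_G\setminus S$. For an integer $k$, a nonempty $S\subseteq V_G$ is a global defensive $k$-alliance in $G$ if every vertex outside $S$ has a neighbor in $S$ and $|N_S(v)|\ge |N_{\bar S}(v)|+k$ for every $v\in S$; $\gamma^d_k(G)$ is the minimum size of such a set ($\infty$ if none exists). $G\langle S\rangle$ is the subgraph of $G$ induced by $S$. A $1$-perfect code in a graph $F$ is a set $D\subseteq V_F$ such that the closed neighborhoods $N[x]=\{x\}\cup N(x)$, $x\in D$, partition $V_F$. The domination number $\gamma(F)$ is the minimum size of a dominating set of $F$. The lexicographic product $G[H]$ has vertex set $V_G\times V_H$, with $(g_1,h_1)\sim(g_2,h_2)$ iff $g_1g_2\in E_G$, or $g_1=g_2$ and $h_1h_2\in E_H$. *)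

(* A simple graph = symmetric irreflexive relation e : rel T on a finType T. *)
From HB Require Import structures.
From mathcomp Require Import all_boot all_order all_algebra.
Set Implicit Arguments. Unset Strict Implicit. Unset Printing Implicit Defensive.
Import Order.TTheory GRing.Theory Num.Theory.

Section Graphs.
Variable T : finType.
Variable e : rel T.

Definition nbhd_in (S : {set T}) (v : T) : {set T} := [set u in S | e v u].

Definition is_gda (k : int) (S : {set T}) : bool :=
  [&& S != set0,
      [forall v, (v \notin S) ==> [exists u in S, e v u]] &
      [forall v in S,
         (#|nbhd_in S v|%:Z >= #|nbhd_in (~: S) v|%:Z + k)%R]].

(* gamma^d_k(G) : None stands for infinity *)
Definition gammad (k : int) : option nat :=
  if [exists S, is_gda k S]
  then Some (\big[minn/#|T|.+1]_(S : {set T} | is_gda k S) #|S|)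
  else None.

Definition dominating (D : {set T}) : bool :=
  [forall v, (v \notin D) ==> [exists u in D, e v u]].

Definition domination_number : nat :=
  \big[minn/#|T|.+1]_(D : {set T} | dominating D) #|D|.

Definition cnbhd (x : T) : {set T} := x |: [set y | e x y].

(* 1-perfect code: the closed neighbourhoods N[x], x in D, partition V
   (every vertex lies in N[x] for exactly one x in D) *)
Definition perfect_code (D : {set T}) : bool :=
  [forall v, #|[set x in D | v \in cnbhd x]| == 1].

Definition has_perfect_code : bool := [exists D, perfect_code D].

End Graphs.

Definition induced (T : finType) (e : rel T) (S : {set T}) : rel {x : T | x \in S} :=
  fun x y => e (val x) (val y).
Arguments induced [T] e S _ _.

Definition lexprod (T1 T2 : finType) (eG : rel T1) (eH : rel T2) : rel (T1 * T2) :=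
  fun x y => eG x.1 y.1 || ((x.1 == y.1) && eH x.2 y.2).

From HB Require Import structures.
From mathcomp Require Import all_boot all_order all_algebra.
From mathcomp Require Import zify.
Import Order.TTheory GRing.Theory Num.Theory.
Set Implicit Arguments. Unset Strict Implicit. Unset Printing Implicit Defensive.

(* Let S be a global defensive k-alliance of G and D a subset of S such that
   every g in S has at most one vertex of D in its closed neighbourhood (e.g.
   a 1-perfect code of G<S>, or D = set0).  The "lift" of (S, D) to G[H] is
     (S \ D) x V_H  u  D x {h0},
   of size n(H)(|S| - |D|) + |D|.  Counting neighbours in G[H] fibre by fibre
   (a vertex (g, h) sees the whole fibre over every G-neighbour of g, plus
   its H-neighbours inside its own fibre), the alliance inequality of S at g
   turns into the one of the lift at (g, h); this needs k >= 2 as soon as D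
   is nonempty.  With D = set0 the lift is always an alliance, which gives
   the existence part; with D the image of a 1-perfect code of G<S>, which
   dominates G<S> and thus has at least gamma(G<S>) vertices, the size of the
   lift gives the bound on gamma^d_k(G[H]) for k >= 2. *)

Lemma bigminn_le (T : finType) (P : pred T) (F : T -> nat) x0 j :
  P j -> \big[minn/x0]_(i | P i) F i <= F j.
Proof.
by move=> Pj; have := @bigmin_le_cond _ nat T x0 j P F Pj; rewrite minEnat leEnat.
Qed.

Lemma card_indicator_sum (T : finType) (A : {pred T}) :
  #|A| = \sum_x (x \in A : nat).
Proof. by rewrite -sum1_card big_mkcond; apply: eq_bigr => x _; case: (x \in A). Qed.

Section Neighbourhoods.
Variables (T : finType) (e : rel T).

Lemma card_nbhd_in_sum (A : {set T}) g :
  #|nbhd_in e A g| = \sum_(x | e g x) (x \in A : nat).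
Proof.
rewrite -sum1_card big_mkcond [RHS]big_mkcond /=.
by apply: eq_bigr => x _; rewrite inE; case: (x \in A); case: (e g x).
Qed.

Lemma card_nbhd_in_split (S D : {set T}) g : D \subset S ->
  #|nbhd_in e S g| = #|nbhd_in e (S :\: D) g| + #|nbhd_in e D g|.
Proof.
move=> /subsetP DS; rewrite !card_nbhd_in_sum -big_split /=.
apply: eq_bigr => x _; rewrite inE.
by have := DS x; case: (x \in D); case: (x \in S) => // /(_ isT).
Qed.

Lemma gda_has_nbr (k : int) (S : {set T}) : (1 <= k)%R -> is_gda e k S ->
  forall v, exists2 u, u \in S & e v u.
Proof.
move=> k1 /and3P [_ /forallP dom /forallP alliance] v.
case: (boolP (v \in S)) => vS; last first.
  by have /implyP/(_ vS)/existsP [u /andP [uS evu]] := dom v; exists u.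
have /implyP/(_ vS) alv := alliance v.
have : 0 < #|nbhd_in e S v| by lia.
by rewrite card_gt0 => /set0Pn [u]; rewrite inE => /andP [uS evu]; exists u.
Qed.

Lemma gammad_le (k : int) (X : {set T}) :
  is_gda e k X -> exists m, gammad e k = Some m /\ m <= #|X|.
Proof.
move=> hX; rewrite /gammad.
have -> : [exists S, is_gda e k S] by apply/existsP; exists X.
by eexists; split; [reflexivity | exact: bigminn_le].
Qed.

Lemma domination_number_le (D : {set T}) :
  dominating e D -> domination_number e <= #|D|.
Proof. exact: bigminn_le. Qed.

Hypotheses (symE : symmetric e) (irrE : irreflexive e).

Lemma perfect_code_packing (D : {set T}) : perfect_code e D ->
  forall v, #|nbhd_in e D v| + (v \in D) = 1.
Proof.
move=> /forallP pc v; have /eqP <- := pc v.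
have inE' x : (x \in [set x in D | v \in cnbhd e x]) = (x \in D) && ((x == v) || e v x).
  by rewrite !inE eq_sym symE.
case: (boolP (v \in D)) => vD.
  have -> : [set x in D | v \in cnbhd e x] = v |: nbhd_in e D v.
    by apply/setP => x; rewrite inE' !inE; case: eqP => // ->; rewrite vD.
  by rewrite cardsU1 !inE irrE andbF addnC.
rewrite addn0; apply: eq_card => x; rewrite inE' !inE.
by case: eqP => // ->; rewrite (negbTE vD).
Qed.

Lemma perfect_code_dominating (D : {set T}) :
  perfect_code e D -> dominating e D.
Proof.
move=> /perfect_code_packing pack; apply/forallP => v; apply/implyP => vD.
have : 0 < #|nbhd_in e D v| by have := pack v; rewrite (negbTE vD) addn0 => ->.
by rewrite card_gt0 => /set0Pn [u]; rewrite inE => uD; apply/existsP; exists u.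
Qed.

End Neighbourhoods.

Lemma nbhd_in_induced (T : finType) (e : rel T) (S : {set T})
    (D0 : {set {x | x \in S}}) (g : {x | x \in S}) :
  nbhd_in e (val @: D0) (val g) = val @: nbhd_in (induced e S) D0 g.
Proof.
apply/setP => u; rewrite inE; apply/andP/imsetP.
  by move=> [/imsetP [y yD ->] egy]; exists y; rewrite // inE yD.
by move=> [y]; rewrite inE => /andP [yD egy] ->; rewrite mem_imset //; exact: val_inj.
Qed.

Section Induced.
Variables (T : finType) (e : rel T) (S : {set T}).
Hypotheses (symE : symmetric e) (irrE : irreflexive e).

Lemma induced_sym : symmetric (induced e S).
Proof. by move=> x y; exact: symE. Qed.

Lemma induced_irr : irreflexive (induced e S).
Proof. by move=> x; exact: irrE. Qed.

Lemma perfect_code_induced_packing (D0 : {set {x | x \in S}}) :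
  perfect_code (induced e S) D0 ->
  forall g, g \in S -> #|nbhd_in e (val @: D0) g| + (g \in val @: D0) <= 1.
Proof.
move=> pc g gS; pose gs : {x | x \in S} := exist _ g gS.
rewrite [g]/(val gs) nbhd_in_induced card_imset ?mem_imset; try exact: val_inj.
by rewrite (perfect_code_packing induced_sym induced_irr pc).
Qed.

End Induced.

(* The two numerical inequalities behind the alliance condition of the lift.
   For a vertex (g, h) of the lift, a, d, b are the numbers of (S \ D)-, D-
   and outside neighbours of g in G, and out, inn count the H-neighbours of h
   outside and inside the lift within the fibre over g.  The first lemma is
   the case g in S \ D (whole fibre in the lift, so out = 0), the second the
   case g in D (single lifted vertex, d = 0 by packing). *)
Lemma lift_ineq_outer (n a b d out inn : nat) (k : int) :
  (1 <= k)%R -> 0 < n -> d <= 1 -> (d = 1 -> 2 <= k)%R -> out = 0 ->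
  (b%:Z + k <= (a + d)%:Z)%R ->
  ((n * b + (n - 1) * d + out)%:Z + k <= (n * a + d + inn)%:Z)%R.
Proof.
move=> k1 n1 d1 dk -> hS.
have slack : (0 <= n%:Z * (a%:Z + d%:Z - b%:Z - k))%R by apply: mulr_ge0; lia.
have [d0 | d_eq1] : d = 0 \/ d = 1 by lia.
  have : (0 <= (n%:Z - 1) * (k - 1))%R by apply: mulr_ge0; lia.
  by rewrite d0 in slack *; nia.
have k2 := dk d_eq1; rewrite d_eq1 in slack *.
have : (0 <= (n%:Z - 1) * (k - 2))%R by apply: mulr_ge0; lia.
nia.
Qed.

Lemma lift_ineq_code (n a b d out inn : nat) (k : int) :
  (1 <= k)%R -> 0 < n -> d = 0 -> out <= n - 1 ->
  (b%:Z + k <= (a + d)%:Z)%R ->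
  ((n * b + (n - 1) * d + out)%:Z + k <= (n * a + d + inn)%:Z)%R.
Proof.
move=> k1 n1 -> out_le hS.
have : (0 <= n%:Z * (a%:Z - b%:Z - k))%R by apply: mulr_ge0; lia.
have : (0 <= (n%:Z - 1) * (k - 1))%R by apply: mulr_ge0; lia.
nia.
Qed.

Lemma lift_size_mono (n s d gamma : nat) :
  0 < n -> gamma <= d -> d <= s -> n * (s - d) + d <= n * (s - gamma) + gamma.
Proof.
move=> n1 gamma_le d_le.
have gap : s - gamma = (s - d) + (d - gamma) by lia.
by rewrite gap mulnDr; have := leq_pmull (d - gamma) n1; lia.
Qed.

Section Lexicographic.
Variables (T1 T2 : finType) (eG : rel T1) (eH : rel T2).
Hypothesis irrG : irreflexive eG.

Local Notation L := (lexprod eG eH).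
Local Notation n := #|T2|.

Definition fib (X : {set T1 * T2}) (x : T1) : {set T2} := [set y | (x, y) \in X].

Lemma fibC (X : {set T1 * T2}) x : fib (~: X) x = ~: fib X x.
Proof. by apply/setP => y; rewrite !inE. Qed.

Lemma card_fib_sum (X : {set T1 * T2}) : #|X| = \sum_x #|fib X x|.
Proof.
under [RHS]eq_bigr => x _ do rewrite -sum1_card big_mkcond /=.
rewrite pair_big /= -sum1_card big_mkcond /=.
by apply: eq_bigr => -[x y] _; rewrite inE.
Qed.

Lemma card_nbhd_lexprod (X : {set T1 * T2}) g h :
  #|nbhd_in L X (g, h)| =
  \sum_(x | eG g x) #|fib X x| + #|nbhd_in eH (fib X g) h|.
Proof.
rewrite [LHS]card_fib_sum (bigID (eG g)) /= [X in _ + X](bigD1 g) ?irrG //=.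
rewrite [X in _ + (_ + X)]big1 ?addn0.
  congr (_ + _).
    by apply: eq_bigr => x egx; apply: eq_card => y; rewrite !inE /lexprod /= egx andbT.
  by apply: eq_card => y; rewrite !inE /lexprod /= irrG eqxx.
move=> x /andP [egx xg]; apply/eqP; rewrite cards_eq0; apply/eqP/setP => y.
by rewrite !inE /lexprod /= (negbTE egx) eq_sym (negbTE xg) andbF.
Qed.

Section Lift.
Variables (S D : {set T1}) (h0 : T2).

Definition lexlift : {set T1 * T2} :=
  [set p | (p.1 \in S :\: D) || ((p.1 \in D) && (p.2 == h0))].

Lemma lexlift_base u : u \in S -> (u, h0) \in lexlift.
Proof. by move=> uS; rewrite !inE /= uS eqxx !andbT; case: (u \in D). Qed.

Lemma card_fib_lexlift x : #|fib lexlift x| = n * (x \in S :\: D) + (x \in D).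
Proof.
rewrite inE; case: (boolP (x \in D)) => xD /=.
  by rewrite muln0 -(cards1 h0); apply: eq_card => y; rewrite !inE /= xD.
case: (boolP (x \in S)) => xS /=.
  by rewrite muln1 addn0 -cardsT; apply: eq_card => y; rewrite !inE /= xD xS.
rewrite muln0; apply/eqP; rewrite cards_eq0; apply/eqP/setP => y.
by rewrite !inE /= (negbTE xD) (negbTE xS).
Qed.

Hypothesis DS : D \subset S.

Lemma card_fib_lexliftC x :
  #|fib (~: lexlift) x| = n * (x \notin S) + (n - 1) * (x \in D).
Proof.
rewrite fibC -[#|~: _|](addKn #|fib lexlift x|) cardsC card_fib_lexlift inE.
case: (boolP (x \in D)) => [xD | _]; last by case: (x \in S) => /=; lia.
by rewrite (subsetP DS x xD) /=; lia.
Qed.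

Lemma card_lexlift : #|lexlift| = n * (#|S| - #|D|) + #|D|.
Proof.
rewrite card_fib_sum; under eq_bigr => x _ do rewrite card_fib_lexlift.
rewrite big_split -big_distrr /= -!card_indicator_sum.
by rewrite cardsD (setIidPr DS).
Qed.

Lemma sum_fib_lexlift g :
  \sum_(x | eG g x) #|fib lexlift x| =
  n * #|nbhd_in eG (S :\: D) g| + #|nbhd_in eG D g|.
Proof.
under eq_bigr => x _ do rewrite card_fib_lexlift.
by rewrite big_split -big_distrr /= -!card_nbhd_in_sum.
Qed.

Lemma sum_fib_lexliftC g :
  \sum_(x | eG g x) #|fib (~: lexlift) x| =
  n * #|nbhd_in eG (~: S) g| + (n - 1) * #|nbhd_in eG D g|.
Proof.
under eq_bigr => x _ do rewrite card_fib_lexliftC.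
rewrite big_split -!big_distrr /= !card_nbhd_in_sum; congr (_ * _ + _).
by apply: eq_bigr => x _; rewrite inE.
Qed.

Lemma lexlift_gda (k : int) :
  (1 <= k)%R -> is_gda eG k S -> 0 < n ->
  (forall g, g \in S -> #|nbhd_in eG D g| + (g \in D) <= 1) ->
  (D != set0 -> 2 <= k)%R ->
  is_gda L k lexlift.
Proof.
move=> k1 Sgda n1 pack kD; have [Sne _ /forallP Sall] := and3P Sgda.
apply/and3P; split.
- have /set0Pn [g gS] := Sne; apply/set0Pn; exists (g, h0); exact: lexlift_base.
- apply/forallP => -[g h]; apply/implyP => _.
  have [u uS egu] := gda_has_nbr k1 Sgda g.
  by apply/existsP; exists (u, h0); rewrite lexlift_base //= /lexprod /= egu.
apply/forallP => -[g h]; apply/implyP => gh_in.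
rewrite !card_nbhd_lexprod sum_fib_lexlift sum_fib_lexliftC.
set out := #|nbhd_in eH (fib (~: _) g) h|.
have out_fib : out <= n * (g \notin S) + (n - 1) * (g \in D).
  rewrite -card_fib_lexliftC; apply: subset_leq_card.
  by apply/subsetP => y; rewrite inE => /andP [].
have alliance_at (gS : g \in S) : (#|nbhd_in eG (~: S) g|%:Z + k <=
    (#|nbhd_in eG (S :\: D) g| + #|nbhd_in eG D g|)%:Z)%R.
  by rewrite -card_nbhd_in_split //; exact: implyP (Sall g) gS.
move: gh_in; rewrite inE /= => /orP [gSD | /andP [gD _]].
  move: gSD; rewrite inE => /andP [gnD gS]; rewrite gS (negbTE gnD) /= in out_fib.
  have d1 : #|nbhd_in eG D g| <= 1 by have := pack g gS; rewrite (negbTE gnD); lia.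
  have d_k2 : #|nbhd_in eG D g| = 1 -> (2 <= k)%R.
    move=> d_eq1; apply: kD; apply/set0Pn.
    have : 0 < #|nbhd_in eG D g| by rewrite d_eq1.
    by rewrite card_gt0 => /set0Pn [u]; rewrite inE => /andP [uD _]; exists u.
  by apply: lift_ineq_outer => //; [lia | exact: alliance_at].
have gS := subsetP DS g gD; rewrite gS gD /= in out_fib.
have d0 : #|nbhd_in eG D g| = 0 by have := pack g gS; rewrite gD; lia.
by apply: lift_ineq_code => //; [lia | exact: alliance_at].
Qed.

End Lift.
End Lexicographic.

Theorem mainTheorem4 (k : int) (T1 T2 : finType) (eG : rel T1) (eH : rel T2)
  (symG : symmetric eG) (irrG : irreflexive eG)
  (symH : symmetric eH) (irrH : irreflexive eH)
  (hk : (1 <= k)%R)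
  (hfin : gammad eG k <> None)
  (S : {set T1}) (hS : is_gda eG k S) (hSmin : gammad eG k = Some #|S|)
  (hpc : has_perfect_code (induced eG S))
  (hH : 2 <= #|T2|) :
  gammad (lexprod eG eH) k <> None /\
  ((2 <= k)%R ->
   exists m, gammad (lexprod eG eH) k = Some m /\
     m <= #|T2| * (#|S| - domination_number (induced eG S))
          + domination_number (induced eG S)).
Proof.
have n1 : 0 < #|T2| by lia.
have [h0 _] := card_gt0P n1.
split.
  have empty_packing g : g \in S -> #|nbhd_in eG set0 g| + (g \in set0) <= 1.
    move=> _; have -> : nbhd_in eG set0 g = set0 by apply/setP => u; rewrite !inE.
    by rewrite cards0 in_set0.
  have no_code_k2 : (set0 != set0 :> {set T1}) -> (2 <= k)%R by rewrite eqxx.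
  have lift_gda := lexlift_gda eH irrG h0 (sub0set S) hk hS n1 empty_packing no_code_k2.
  by have [m [-> _]] := gammad_le lift_gda.
move=> k2; have [D0 code] := existsP hpc; set D := val @: D0.
have DS : D \subset S by apply/subsetP => _ /imsetP [x _ ->]; exact: valP.
have packD := perfect_code_induced_packing symG irrG code.
have lift_gda := lexlift_gda eH irrG h0 DS hk hS n1 packD (fun _ => k2).
have [m [gm m_le]] := gammad_le lift_gda; exists m; split => //.
have cardD : #|D| = #|D0| by rewrite card_imset //; exact: val_inj.
have gamma_le : domination_number (induced eG S) <= #|D|.
  rewrite cardD; apply: domination_number_le.
  exact (perfect_code_dominating (induced_sym symG) (induced_irr irrG) code).
rewrite card_lexlift // in m_le; apply: leq_trans m_le _.
exact: lift_size_mono n1 gamma_le (subset_leq_card DS).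
Qed.
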